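(* Let $S$ be a monoid in which the unique maximal right ideal $\mathfrak{M}$ is a two-sided ideal. Let $A$ be a finitely generated quasi-strongly faithful right $S$-act with a unique zero element $\theta$. If $AI=A$ for some proper right ideal $I$ of $S$, then $A=\{\theta\}$.
   Context: $S$ is a monoid with identity $1$ having at least one right non-invertible element. A (right) $S$-act is a nonempty set $A$ with a map $A\times S\to A$, $(a,s)\mapsto as$, such that $a1=a$ and $a(st)=(as)t$ for all $a\in A$, $s,t\in S$. An element $\theta\in A$ is a zero if $\theta s=\theta$ for all $s\in S$. $\mathfrak{M}=\{s\in S \mid st\neq 1 \text{ for all } t\in S\}$ is the set of right non-invertible elements; it is the unique maximal right ideal of $S$, and every proper right ideal is contained in it. For a right ideal $I$, $AI=\{as\mid a\in A,\ s\in I\}$. $A$ is finitely generated if there is a finite $X\subseteq A$ with $A=\bigcup_{x\in X}xS$. An $S$-act $A$ is called quasi-strongly faithful if for $a\in A$ and $s\in S$, the equality $as=a$ implies $s\notin\mathfrak{M}$ (when $A$ has a unique zero $\theta$, this is required only for $a\neq\theta$). *)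

From Stdlib Require Import List.
Set Implicit Arguments.

Section Defs.
Variables (S : Type) (mul : S -> S -> S) (one : S).

Definition is_monoid : Prop :=
  (forall x y z, mul x (mul y z) = mul (mul x y) z) /\
  (forall x, mul one x = x) /\ (forall x, mul x one = x).

Definition right_noninv (s : S) : Prop := forall t, mul s t <> one.

Definition right_ideal (I : S -> Prop) : Prop :=
  (exists s, I s) /\ (forall s t, I s -> I (mul s t)).

Definition two_sided_ideal (I : S -> Prop) : Prop :=
  (exists s, I s) /\ (forall s t, I s -> I (mul s t)) /\
  (forall s t, I s -> I (mul t s)).

Definition proper (I : S -> Prop) : Prop := exists s, ~ I s.

Variables (A : Type) (act : A -> S -> A).

Definition is_act : Prop :=
  (forall a, act a one = a) /\ (forall a s t, act a (mul s t) = act (act a s) t).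

Definition is_zero (z : A) : Prop := forall s, act z s = z.

Definition unique_zero (z : A) : Prop :=
  is_zero z /\ forall z', is_zero z' -> z' = z.

Definition finitely_generated : Prop :=
  exists X : list A, forall a, exists x s, In x X /\ act x s = a.

Definition quasi_strongly_faithful : Prop :=
  forall a s, act a s = a ->
    ~ right_noninv s \/ (exists th, unique_zero th /\ a = th).

(** A I = A  (the inclusion AI ⊆ A is automatic). *)
Definition act_ideal_eq (I : S -> Prop) : Prop :=
  forall a, exists b s, I s /\ act b s = a.

End Defs.

(** Say [a] is below [b] when [a = b m] for some right non-invertible [m];
    this is transitive because [M] is a right ideal. A proper right ideal [I]
    lies in [M], and [M] is a left ideal, so [A = AI] puts every element below
    a generator. Climbing through the finite generating set must revisit a
    generator [x], giving [x = x m] with [m] in [M]; by quasi-strong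
    faithfulness [x] is the zero, hence so is every element below it. *)

From Stdlib Require Import List Classical.

Lemma transitive_cover_has_loop {T : Type} {R : T -> T -> Prop}
    (R_trans : forall a b c, R a b -> R b c -> R a c) (X : list T) (a : T) :
  (forall b, b = a \/ R a b -> exists y, In y X /\ R b y) ->
  exists y, R a y /\ R y y.
Proof.
  revert a; induction X as [|x X IHX]; intros a Hcover.
  - destruct (Hcover a (or_introl eq_refl)) as [y [[] _]].
  - destruct (classic (exists b, (b = a \/ R a b) /\ R b x))
      as [[b [Hb Hbx]] | Hnot_to_x].
    + assert (Hax : R a x) by (destruct Hb as [-> | Hab]; eauto).
      destruct (classic (R x x)) as [Hxx | Hxx]; [now exists x|].
      (* without a loop at [x], no point above [x] returns to [x] *)
      destruct (IHX x) as [y [Hxy Hyy]]; [|now eauto].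
      intros c Hc; destruct (Hcover c) as [y [[<- | HyX] Hcy]].
      * destruct Hc as [-> | Hxc]; eauto.
      * destruct Hc as [-> | Hxc]; [contradiction | now elim Hxx; eauto].
      * now exists y.
    + apply IHX; intros c Hc.
      destruct (Hcover c Hc) as [y [[<- | HyX] Hcy]].
      * now elim Hnot_to_x; exists c.
      * now exists y.
Qed.

Section QuasiStronglyFaithful.

Context {S : Type} {mul : S -> S -> S} {one : S}.
Hypothesis HS : is_monoid mul one.

Notation M := (right_noninv mul one).

Lemma proper_right_ideal_sub_noninv {I : S -> Prop} :
  right_ideal mul I -> proper I -> forall s, I s -> M s.
Proof.
  destruct HS as [mulA [mul1s _]].
  intros [_ HIr] [s0 Hs0] s Hs t Hst.
  apply Hs0; rewrite <- mul1s, <- Hst, <- mulA; exact (HIr _ _ Hs).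
Qed.

Context {A : Type} {act : A -> S -> A}.
Hypothesis HA : is_act mul one act.

Definition below (a b : A) : Prop := exists m, M m /\ a = act b m.

Lemma below_trans (a b c : A) : below a b -> below b c -> below a c.
Proof.
  intros [m [Hm ->]] [n [Hn ->]]; exists (mul n m); split.
  - intro t; rewrite <- (proj1 HS); apply Hn.
  - symmetry; apply (proj2 HA).
Qed.

Lemma below_generator {I : S -> Prop} {X : list A} :
  two_sided_ideal mul M -> right_ideal mul I -> proper I ->
  (forall a, exists x s, In x X /\ act x s = a) -> act_ideal_eq act I ->
  forall a, exists x, In x X /\ below a x.
Proof.
  intros [_ [_ HMl]] HI HIp HX HAI a.
  destruct (HAI a) as [b [s [Hs <-]]].
  destruct (HX b) as [x [t [Hx <-]]].
  exists x; split; [exact Hx|]; exists (mul t s); split.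
  - apply HMl; exact (proper_right_ideal_sub_noninv HI HIp s Hs).
  - symmetry; apply (proj2 HA).
Qed.

Lemma below_self_zero {th : A} :
  unique_zero act th -> quasi_strongly_faithful mul one act ->
  forall a, below a a -> a = th.
Proof.
  intros [_ Hth_uniq] Hqsf a [m [Hm Ham]].
  destruct (Hqsf a m (eq_sym Ham)) as [Hnm | [th' [[Hth' _] ->]]].
  - contradiction.
  - exact (Hth_uniq th' Hth').
Qed.

End QuasiStronglyFaithful.

Theorem theorem2p11
  (S : Type) (mul : S -> S -> S) (one : S)
  (HS : is_monoid mul one)
  (Hnoninv : exists s, right_noninv mul one s)
  (HM : two_sided_ideal mul (right_noninv mul one))
  (A : Type) (act : A -> S -> A)
  (HA : is_act mul one act)
  (th : A) (Hth : unique_zero act th)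
  (Hfg : finitely_generated act)
  (Hqsf : quasi_strongly_faithful mul one act)
  (I : S -> Prop) (HI : right_ideal mul I) (HIp : proper I)
  (HAI : act_ideal_eq act I) :
  forall a : A, a = th.
Proof.
  destruct Hfg as [X HX]; intro a.
  destruct (transitive_cover_has_loop (below_trans HS HA) X a)
    as [x [[m [_ ->]] Hxx]].
  { intros b _; exact (below_generator HS HA HM HI HIp HX HAI b). }
  rewrite (below_self_zero Hth Hqsf _ Hxx); apply (proj1 Hth).
Qed.
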